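(* Let \(R\) be a torsionfree bornological \(V\)-algebra. If \(R\) is nuclear or a dagger algebra, then the canonical map \((R')^{\dagger}\to (R^{\dagger})'\) is an isomorphism.
   Context: Let \(V\) be a complete discrete valuation ring with uniformiser \(\pi\). A bornology on a set is a collection of subsets (called bounded) containing all finite subsets and closed under finite unions and under taking subsets. A bornological \(V\)-module is a \(V\)-module with a bornology such that every bounded subset is contained in a bounded \(V\)-submodule; it is complete if every bounded subset is contained in a bounded \(\pi\)-adically complete \(V\)-submodule, and torsionfree if it is torsionfree as a \(V\)-module and \(\pi^{-1}S=\{x:\pi x\in S\}\) is bounded for every bounded \(S\). A bornological \(V\)-algebra has bounded multiplication; it is semidagger if \(\sum_{i\ge0}\pi^iS^{i+1}\) is bounded for every bounded \(S\), and a dagger algebra if it is complete, torsionfree and semidagger. The linear growth bornology on \(R\) is generated by the submodules \(\sum_{i\ge0}\pi^iS^{i+1}\) for bounded \(S\); \(R^{\dagger}\) is the completion of \(R\) with the linear growth bornology, which for torsionfree \(R\) is a dagger algebra receiving a canonical bounded homomorphism \(R\to R^\dagger\) through which every bounded homomorphism from \(R\) to a dagger algebra factors uniquely. A subset \(S\subseteq M\) is compactoid if there is a bounded \(V\)-submodule \(T\subseteq M\) with \(S\subseteq T\) such that for every \(n\) there is a finite \(F_n\subseteq T\) with \(S\subseteq VF_n+\pi^nT\); \(M'\) is \(M\) with the compactoid bornology, and \(M\) is nuclear if all bounded subsets are compactoid. For torsionfree \(R\), \(R'\) is torsionfree and \((R^\dagger)'\) is a dagger algebra; the canonical map \((R')^\dagger\to(R^\dagger)'\)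 is the unique bounded homomorphism extending the bounded homomorphism \(R'\to(R^\dagger)'\) induced by \(R\to R^\dagger\). *)

From HB Require Import structures.
From mathcomp Require Import all_boot all_order all_algebra.
Set Implicit Arguments.
Unset Strict Implicit.
Unset Printing Implicit Defensive.
Import GRing.Theory.
Local Open Scope ring_scope.

Definition cdvr (V : idomainType) (pi : V) : Prop :=
  [/\ pi != 0, pi \notin GRing.unit,
   (forall x : V, x != 0 -> exists (u : V) (n : nat), u \is a GRing.unit /\ x = u * pi ^+ n) &
   (forall x : nat -> V, (forall n, exists y, x n.+1 - x n = pi ^+ n * y) ->
      exists l, forall n, exists y, l - x n = pi ^+ n * y)].

Definition bsubs (M : Type) (S T : M -> Prop) := forall x, S x -> T x.

Definition bimage (M N : Type) (f : M -> N) (S : M -> Prop) : N -> Prop :=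
  fun y => exists x, S x /\ y = f x.

Definition submod (V : idomainType) (M : lmodType V) (T : M -> Prop) : Prop :=
  [/\ T 0, (forall x y, T x -> T y -> T (x + y)) & (forall (a : V) x, T x -> T (a *: x))].

Definition bspan (V : idomainType) (M : lmodType V) (X : M -> Prop) : M -> Prop :=
  fun x => forall T, submod T -> bsubs X T -> T x.

Definition bsmul (V : idomainType) (M : lmodType V) (c : V) (T : M -> Prop) : M -> Prop :=
  fun x => exists t, T t /\ x = c *: t.

Definition bornology (M : eqType) (B : (M -> Prop) -> Prop) : Prop :=
  [/\ (forall s : seq M, B (fun x => x \in s)),
      (forall S T, B S -> B T -> B (fun x => S x \/ T x)) &
      (forall S T, bsubs S T -> B T -> B S)].

Definition gen_born (M : eqType) (F : (M -> Prop) -> Prop) : (M -> Prop) -> Prop :=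
  fun X => forall B', bornology B' -> (forall Y, F Y -> B' Y) -> B' X.

Definition bmod (V : idomainType) (M : lmodType V) (B : (M -> Prop) -> Prop) : Prop :=
  bornology B /\ (forall S, B S -> exists T, [/\ B T, submod T & bsubs S T]).

Definition padic_complete (V : idomainType) (pi : V) (M : lmodType V) (T : M -> Prop) : Prop :=
  (forall x, T x -> (forall n, bsmul (pi ^+ n) T x) -> x = 0) /\
  (forall u : nat -> M, (forall n, T (u n)) ->
     (forall n, bsmul (pi ^+ n) T (u n.+1 - u n)) ->
     exists l, T l /\ forall n, bsmul (pi ^+ n) T (l - u n)).

Definition bcomplete (V : idomainType) (pi : V) (M : lmodType V) (B : (M -> Prop) -> Prop) : Prop :=
  forall S, B S -> exists T, [/\ B T, submod T, padic_complete pi T & bsubs S T].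

Definition torsionfree (V : idomainType) (pi : V) (M : lmodType V) (B : (M -> Prop) -> Prop) : Prop :=
  (forall (a : V) (x : M), a *: x = 0 -> a = 0 \/ x = 0) /\
  (forall S, B S -> B (fun x => S (pi *: x))).

Definition bounded_map (M N : Type) (BM : (M -> Prop) -> Prop) (BN : (N -> Prop) -> Prop)
  (f : M -> N) : Prop := forall S, BM S -> BN (bimage f S).

Definition blin (V : idomainType) (M N : lmodType V) (f : M -> N) : Prop :=
  forall (a : V) x y, f (a *: x + y) = a *: f x + f y.

(* (not necessarily unital or commutative) bornological V-algebra *)
Definition balg (V : idomainType) (M : lmodType V) (mul : M -> M -> M)
  (B : (M -> Prop) -> Prop) : Prop :=
  [/\ bmod B,
      (forall (a : V) x y z, mul (a *: x + y) z = a *: mul x z + mul y z),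
      (forall (a : V) x y z, mul z (a *: x + y) = a *: mul z x + mul z y),
      (forall x y z, mul x (mul y z) = mul (mul x y) z) &
      (forall S T, B S -> B T -> B (fun z => exists x y, [/\ S x, T y & z = mul x y]))].

Definition bhom (V : idomainType) (M N : lmodType V) (mulM : M -> M -> M) (mulN : N -> N -> N)
  (f : M -> N) : Prop := blin f /\ forall x y, f (mulM x y) = mulN (f x) (f y).

Definition lg_gens (V : idomainType) (pi : V) (M : lmodType V) (mul : M -> M -> M)
  (S : M -> Prop) : M -> Prop :=
  fun z => exists (i : nat) (x : M) (s : seq M),
    [/\ size s = i, S x, (forall y, y \in s -> S y) & z = pi ^+ i *: foldl mul x s].

(* sum_{i >= 0} pi^i S^{i+1} : the V-submodule generated by lg_gens *)
Definition lgset (V : idomainType) (pi : V) (M : lmodType V) (mul : M -> M -> M)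
  (S : M -> Prop) : M -> Prop := bspan (lg_gens pi mul S).

Definition semidagger (V : idomainType) (pi : V) (M : lmodType V) (mul : M -> M -> M)
  (B : (M -> Prop) -> Prop) : Prop := forall S, B S -> B (lgset pi mul S).

Definition dagger_alg (V : idomainType) (pi : V) (M : lmodType V) (mul : M -> M -> M)
  (B : (M -> Prop) -> Prop) : Prop :=
  [/\ balg mul B, bcomplete pi B, torsionfree pi B & semidagger pi mul B].

Definition lgborn (V : idomainType) (pi : V) (M : lmodType V) (mul : M -> M -> M)
  (B : (M -> Prop) -> Prop) : (M -> Prop) -> Prop :=
  gen_born (fun Y => exists S, B S /\ Y = lgset pi mul S).

(* compactoid subsets and compactoid bornology M' *)
Definition compactoid (V : idomainType) (pi : V) (M : lmodType V)
  (B : (M -> Prop) -> Prop) (S : M -> Prop) : Prop :=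
  exists T, [/\ B T, submod T, bsubs S T &
    forall n : nat, exists F : seq M, (forall y, y \in F -> T y) /\
      bsubs S (fun x => exists a b, [/\ bspan (fun y => y \in F) a,
                                        bsmul (pi ^+ n) T b & x = a + b])].

Definition nuclear (V : idomainType) (pi : V) (M : lmodType V)
  (B : (M -> Prop) -> Prop) : Prop := forall S, B S -> compactoid pi B S.

(* completion of a bornological V-module, by its universal property *)
Definition is_completion (V : idomainType) (pi : V) (M : lmodType V) (BM : (M -> Prop) -> Prop)
  (N : lmodType V) (BN : (N -> Prop) -> Prop) (i : M -> N) : Prop :=
  [/\ bmod BN, bcomplete pi BN, blin i, bounded_map BM BN i &
    forall (W : lmodType V) (BW : (W -> Prop) -> Prop), bmod BW -> bcomplete pi BW ->
      forall f : M -> W, blin f -> bounded_map BM BW f ->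
        exists! g : N -> W, [/\ blin g, bounded_map BN BW g & forall x, g (i x) = f x]].

(* (D, i) is a dagger completion R^dagger of (R, mul, B): the completion of R with
   the linear growth bornology, with its algebra structure making i a homomorphism *)
Definition dagger_completion (V : idomainType) (pi : V) (R : lmodType V) (mulR : R -> R -> R)
  (BR : (R -> Prop) -> Prop) (D : lmodType V) (mulD : D -> D -> D)
  (BD : (D -> Prop) -> Prop) (i : R -> D) : Prop :=
  [/\ balg mulD BD, bhom mulR mulD i & is_completion pi (lgborn pi mulR BR) BD i].

From mathcomp Require Import all_boot all_order all_algebra.
Set Implicit Arguments.
Unset Strict Implicit.
Unset Printing Implicit Defensive.
Import GRing.Theory.
Local Open Scope ring_scope.

(* Both [(R')^dagger] and [R^dagger] are completions of [R], so by the uniqueness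
   half of their universal properties it suffices to find a bounded linear map
   [psi : (R^dagger)' -> (R')^dagger] extending [j : R -> (R')^dagger] with
   [phi \o psi = id]; then also [psi \o phi = id], and [psi] is multiplicative
   because [phi] is.  If [R] is nuclear, the bornology of [R] is the compactoid
   one, so [psi] comes from the universal property of [R^dagger].  If [R] is a
   dagger algebra, the linear growth bornology is no finer than the given one,
   so [R^dagger = R] and [psi] is [j], because bounded linear maps carry
   compactoid subsets to compactoid subsets. *)

Lemma bornology_sub (M : eqType) (B : (M -> Prop) -> Prop) (S T : M -> Prop) :
  bornology B -> bsubs S T -> B T -> B S.
Proof. by move=> [_ _ subB] /subB. Qed.

Lemma compactoid_bounded (V : idomainType) (pi : V) (M : lmodType V)
    (B : (M -> Prop) -> Prop) (S : M -> Prop) :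
  bornology B -> compactoid pi B S -> B S.
Proof. by move=> bornB [T [BT _ ST _]]; apply: bornology_sub bornB ST BT. Qed.

Lemma gen_born_mono (M : eqType) (F F' : (M -> Prop) -> Prop) (X : M -> Prop) :
  (forall Y, F Y -> F' Y) -> gen_born F X -> gen_born F' X.
Proof. by move=> FF' FX B' bornB' F'B'; apply: FX bornB' _ => Y /FF' /F'B'. Qed.

Lemma sub_lgset (V : idomainType) (pi : V) (M : lmodType V) (mul : M -> M -> M)
    (S : M -> Prop) :
  bsubs S (lgset pi mul S).
Proof.
move=> x Sx T _ gensT; apply: gensT; exists 0%N, x, [::].
by rewrite expr0 scale1r.
Qed.

Lemma lgborn_of_bounded (V : idomainType) (pi : V) (M : lmodType V)
    (mul : M -> M -> M) (B : (M -> Prop) -> Prop) (S : M -> Prop) :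
  B S -> lgborn pi mul B S.
Proof.
move=> BS B' bornB' lgB'; apply: bornology_sub bornB' (@sub_lgset _ pi _ mul S) _.
by apply: lgB'; exists S.
Qed.

Lemma lgborn_mono (V : idomainType) (pi : V) (M : lmodType V) (mul : M -> M -> M)
    (B B' : (M -> Prop) -> Prop) (S : M -> Prop) :
  (forall T, B T -> B' T) -> lgborn pi mul B S -> lgborn pi mul B' S.
Proof.
move=> BB'; apply: gen_born_mono => _ [T [BT ->]].
by exists T; split => //; apply: BB'.
Qed.

Lemma semidagger_lgborn (V : idomainType) (pi : V) (M : lmodType V)
    (mul : M -> M -> M) (B : (M -> Prop) -> Prop) (S : M -> Prop) :
  bornology B -> semidagger pi mul B -> lgborn pi mul B S -> B S.
Proof. by move=> bornB sdB lgS; apply: lgS bornB _ => _ [T [BT ->]]; apply: sdB. Qed.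

Lemma bspan_submod (V : idomainType) (M : lmodType V) (X : M -> Prop) : submod (bspan X).
Proof.
split=> [T [T0 _ _] _ // | x y Xx Xy T subT XT | a x Xx T subT XT].
- by case: (subT) => _ TD _; apply: TD; [apply: Xx | apply: Xy].
- by case: (subT) => _ _ TZ; apply: TZ; apply: Xx.
Qed.

Section LinearMaps.
Variables (V : idomainType) (M N : lmodType V).

Lemma blin0 (f : M -> N) : blin f -> f 0 = 0.
Proof. by move=> linf; have := linf (-1) 0 0; rewrite scaler0 addr0 scaleN1r addNr. Qed.

Lemma blinD (f : M -> N) x y : blin f -> f (x + y) = f x + f y.
Proof. by move=> linf; have := linf 1 x y; rewrite !scale1r. Qed.

Lemma blinZ (f : M -> N) a x : blin f -> f (a *: x) = a *: f x.
Proof. by move=> linf; have := linf a x 0; rewrite !addr0 blin0 // addr0. Qed.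

Lemma blin_comp (P : lmodType V) (f : M -> N) (g : N -> P) :
  blin f -> blin g -> blin (fun x => g (f x)).
Proof. by move=> linf ling a x y; rewrite linf ling. Qed.

Lemma submod_preimage (f : M -> N) (T : N -> Prop) :
  blin f -> submod T -> submod (fun x => T (f x)).
Proof.
move=> linf [T0 TD TZ]; split=> [|x y Tx Ty|a x Tx].
- by rewrite blin0.
- by rewrite blinD //; apply: TD.
- by rewrite blinZ //; apply: TZ.
Qed.

Lemma submod_image (f : M -> N) (T : M -> Prop) :
  blin f -> submod T -> submod (bimage f T).
Proof.
move=> linf [T0 TD TZ]; split.
- by exists 0; rewrite blin0.
- by move=> _ _ [x [Tx ->]] [y [Ty ->]]; exists (x + y); rewrite blinD //; split => //; apply: TD.
- by move=> a _ [x [Tx ->]]; exists (a *: x); rewrite blinZ //; split => //; apply: TZ.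
Qed.

Lemma bspan_map (f : M -> N) (F : seq M) x :
  blin f -> bspan (fun y => y \in F) x -> bspan (fun y => y \in map f F) (f x).
Proof.
move=> linf Fx; apply: (Fx (fun y => bspan _ (f y))).
  exact: submod_preimage linf (bspan_submod _).
by move=> y Fy T _ FT; apply/FT/map_f.
Qed.

End LinearMaps.

Lemma bounded_map_comp (M N : Type) (P : eqType) BM BN (BP : (P -> Prop) -> Prop)
    (f : M -> N) (g : N -> P) :
  bornology BP -> bounded_map BM BN f -> bounded_map BN BP g ->
  bounded_map BM BP (fun x => g (f x)).
Proof.
move=> bornP bdf bdg S BS; apply: bornology_sub bornP _ (bdg _ (bdf _ BS)).
by move=> _ [x [Sx ->]]; exists (f x); split => //; exists x.
Qed.

Lemma bounded_map_id (M : eqType) (B : (M -> Prop) -> Prop) :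
  bornology B -> bounded_map B B (fun x => x).
Proof. by move=> bornB S; apply: bornology_sub bornB _ => _ [x [Sx ->]]. Qed.

Lemma bounded_map_mono (M N : Type) BM BM' BN BN' (f : M -> N) :
  (forall S, BM' S -> BM S) -> (forall S, BN S -> BN' S) ->
  bounded_map BM BN f -> bounded_map BM' BN' f.
Proof. by move=> BM'M BNN' bdf S /BM'M /bdf /BNN'. Qed.

Lemma compactoid_image (V : idomainType) (pi : V) (M N : lmodType V) BM BN
    (f : M -> N) (S : M -> Prop) :
  blin f -> bounded_map BM BN f -> compactoid pi BM S -> compactoid pi BN (bimage f S).
Proof.
move=> linf bdf [T [BT subT ST approx]].
exists (bimage f T); split; [exact: bdf | exact: submod_image | |].
  by move=> _ [x [Sx ->]]; exists x; split => //; apply: ST.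
move=> n; have [F [FT SF]] := approx n.
exists (map f F); split.
  by move=> _ /mapP [y Fy ->]; exists y; split => //; apply: FT.
move=> _ [x [Sx ->]]; have [a [_ [Fa [t [Tt ->]] ->]]] := SF x Sx.
exists (f a), (f (pi ^+ n *: t)); split; first exact: bspan_map.
  by exists (f t); split; [exists t | rewrite blinZ].
by rewrite blinD.
Qed.

Lemma completion_endo_id (V : idomainType) (pi : V) (M : lmodType V) BM
    (N : lmodType V) (BN : (N -> Prop) -> Prop) (i : M -> N) (g : N -> N) :
  is_completion pi BM BN i -> blin g -> bounded_map BN BN g ->
  (forall x, g (i x) = i x) -> forall y, g y = y.
Proof.
move=> [bmodN complN lini bdi univ] ling bdg gi y.
have [bornN _] := bmodN.
have [h [_ uniq_h]] := univ N BN bmodN complN i lini bdi.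
by rewrite -(uniq_h g) // (uniq_h (fun x => x)) //; split=> //; apply: bounded_map_id.
Qed.

Lemma bhom_inverse (V : idomainType) (M N : lmodType V) (mulM : M -> M -> M)
    (mulN : N -> N -> N) (f : M -> N) (g : N -> M) :
  bhom mulM mulN f -> cancel f g -> cancel g f -> bhom mulN mulM g.
Proof.
move=> [linf mulf] fK gK; split=> [a x y | x y].
  by rewrite -{1}(gK x) -{1}(gK y) -linf fK.
by rewrite -{1}(gK x) -{1}(gK y) -mulf fK.
Qed.

Section CompactoidDagger.
Variables (V : idomainType) (pi : V) (R : lmodType V) (mulR : R -> R -> R).
Variable BR : (R -> Prop) -> Prop.
Variables (D : lmodType V) (BD : (D -> Prop) -> Prop) (iota : R -> D).
Variables (E : lmodType V) (BE : (E -> Prop) -> Prop) (j : R -> E) (phi : E -> D).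

Hypothesis completionD : is_completion pi (lgborn pi mulR BR) BD iota.
Hypothesis completionE : is_completion pi (lgborn pi mulR (compactoid pi BR)) BE j.
Hypothesis phi_linear : blin phi.
Hypothesis phi_bounded : bounded_map BE (compactoid pi BD) phi.
Hypothesis phi_j : forall x, phi (j x) = iota x.

Definition phi_section (psi : D -> E) : Prop :=
  [/\ blin psi, bounded_map (compactoid pi BD) BE psi,
      (forall x, psi (iota x) = j x) & cancel psi phi].

Lemma nuclear_phi_section : nuclear pi BR -> exists psi, phi_section psi.
Proof.
move=> nucR.
have [bmodD _ _ _ univD] := completionD.
have [bmodE complE linj bdj _] := completionE.
have bornD : bornology BD by case: bmodD.
have bdj_R : bounded_map (lgborn pi mulR BR) BE j.
  by apply: bounded_map_mono bdj => // S; apply: lgborn_mono.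
have [psi [[linpsi bdpsi psi_iota] _]] := univD E BE bmodE complE j linj bdj_R.
exists psi; split => //.
  by apply: bounded_map_mono bdpsi => // S; apply: compactoid_bounded.
apply: (completion_endo_id (g := fun y => phi (psi y)) completionD).
- exact: blin_comp linpsi phi_linear.
- apply: (bounded_map_comp bornD bdpsi).
  by apply: bounded_map_mono phi_bounded => // S; apply: compactoid_bounded.
- by move=> x; rewrite psi_iota phi_j.
Qed.

Lemma dagger_alg_phi_section :
  bmod BR -> bcomplete pi BR -> semidagger pi mulR BR -> exists psi, phi_section psi.
Proof.
move=> bmodR complR sdR.
have [bmodD _ liniota bdiota univD] := completionD.
have [[bornE _] _ linj bdj _] := completionE.
have [bornR _] := bmodR; have [bornD _] := bmodD.
have bd_id : bounded_map (lgborn pi mulR BR) BR (fun x => x).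
  by apply: bounded_map_mono (bounded_map_id bornR) => // S; apply: semidagger_lgborn.
have [g [[ling bdg g_iota] _]] := univD R BR bmodR complR _ (fun _ _ _ => erefl) bd_id.
have gK : cancel g iota.
  apply: (completion_endo_id (g := fun y => iota (g y)) completionD).
  - exact: blin_comp ling liniota.
  - apply: (bounded_map_comp bornD bdg).
    by apply: bounded_map_mono bdiota => // S; apply: lgborn_of_bounded.
  - by move=> x; rewrite g_iota.
exists (fun y => j (g y)); split.
- exact: blin_comp ling linj.
- apply: bounded_map_comp bornE (fun S => compactoid_image ling bdg) _.
  by apply: bounded_map_mono bdj => // S; apply: lgborn_of_bounded.
- by move=> x; rewrite g_iota.
- by move=> y; rewrite phi_j gK.
Qed.

Lemma phi_section_cancel (psi : D -> E) : phi_section psi -> cancel phi psi.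
Proof.
move=> [linpsi bdpsi psi_iota _].
have [[bornE _] _ _ _ _] := completionE.
apply: (completion_endo_id (g := fun x => psi (phi x)) completionE).
- exact: blin_comp phi_linear linpsi.
- by apply: bounded_map_comp bornE phi_bounded bdpsi.
- by move=> x; rewrite phi_j psi_iota.
Qed.

End CompactoidDagger.

Theorem proposition4p11 (V : idomainType) (pi : V)
  (R : lmodType V) (mulR_ : R -> R -> R) (BR : (R -> Prop) -> Prop)
  (D : lmodType V) (mulD_ : D -> D -> D) (BD : (D -> Prop) -> Prop) (iota : R -> D)
  (E : lmodType V) (mulE_ : E -> E -> E) (BE : (E -> Prop) -> Prop) (j : R -> E)
  (phi : E -> D) :
  cdvr pi ->
  balg mulR_ BR -> torsionfree pi BR ->
  (* (D, iota) = R^dagger *)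
  dagger_completion pi mulR_ BR mulD_ BD iota ->
  (* (E, j) = (R')^dagger *)
  dagger_completion pi mulR_ (compactoid pi BR) mulE_ BE j ->
  (* phi : (R')^dagger -> (R^dagger)' the canonical map *)
  bhom mulE_ mulD_ phi -> bounded_map BE (compactoid pi BD) phi ->
  (forall x, phi (j x) = iota x) ->
  (nuclear pi BR \/ dagger_alg pi mulR_ BR) ->
  exists psi : D -> E,
    [/\ bhom mulD_ mulE_ psi, bounded_map (compactoid pi BD) BE psi,
        (forall x, psi (phi x) = x) & (forall y, phi (psi y) = y)].
Proof.
move=> _ _ _ [_ _ completionD] [_ _ completionE] homphi bdphi phi_j nuclear_or_dagger.
have [psi sectionpsi] : exists psi, phi_section pi BD iota BE j phi psi.
  case: nuclear_or_dagger => [nucR | [[bmodR _ _ _ _] complR _ sdR]].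
  - exact: nuclear_phi_section completionD completionE homphi.1 bdphi phi_j nucR.
  - exact: dagger_alg_phi_section completionD completionE phi_j bmodR complR sdR.
have phiK := phi_section_cancel completionE homphi.1 bdphi phi_j sectionpsi.
have [_ bdpsi _ psiK] := sectionpsi.
by exists psi; split => //; apply: bhom_inverse homphi phiK psiK.
Qed.
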